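(* Let $d,J,n\ge1$, let $y_1,\dots,y_n\in\mathbb{R}^d$, and let $\{\theta^k\}_{k\in\mathbb N}$ be the sequence generated by the CEMM algorithm (described in the context) from an initial point $\theta^0\in\Theta$. Then the sequence $\{\Lambda(\theta^k\mid\mathbf y)\}_{k\in\mathbb N}$ is monotone non-decreasing and satisfies, for every $k$, $$\Lambda(\theta^{k+1}\mid\mathbf y)-\Lambda(\theta^k\mid\mathbf y)\ \ge\ D(\theta^{k+1},\theta^k\mid\mathbf y).$$
   Context: $\varphi(y\mid\mu,\Sigma)$ is the Gaussian density on $\mathbb R^d$ with mean $\mu$ and covariance $\Sigma$. $\Theta$ is the set of $\theta=(p_1,\dots,p_J,\mu_1,\dots,\mu_J,\Sigma_1,\dots,\Sigma_J)$ with $p_j\in(0,1)$, $\mu_j\in\mathbb R^d$, $\Sigma_j$ symmetric positive definite (proportions not required to sum to 1); write $\theta_j=(p_j,\mu_j,\Sigma_j)$. The observed log-likelihood is $L(\theta\mid\mathbf y)=\sum_{i=1}^n\log\sum_{j=1}^J p_j\varphi(y_i\mid\mu_j,\Sigma_j)$ and the modified log-likelihood is $\Lambda(\theta\mid\mathbf y)=L(\theta\mid\mathbf y)-n\big(\sum_{\ell=1}^J p_\ell-1\big)$. Let $t_{ij}(\theta)=p_j\varphi(y_i\mid\mu_j,\Sigma_j)/\sum_{\ell=1}^J p_\ell\varphi(y_i\mid\mu_\ell,\Sigma_\ell)$ and $D(\theta,\theta'\mid\mathbf y)=\sum_{i=1}^n\sum_{j=1}^J t_{ij}(\theta')\log\big(t_{ij}(\theta')/t_{ij}(\theta)\big)$.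 CEMM algorithm: given $\theta^k$, let $j=k-\lfloor k/J\rfloor J+1$ (so components are visited cyclically). Compute $t_{ij}(\theta^k)$ for $i=1,\dots,n$, set $p_j^{k+1}=\frac1n\sum_i t_{ij}(\theta^k)$, $\mu_j^{k+1}=\sum_i t_{ij}(\theta^k)y_i/\sum_i t_{ij}(\theta^k)$, $\Sigma_j^{k+1}=\sum_i t_{ij}(\theta^k)(y_i-\mu_j^{k+1})(y_i-\mu_j^{k+1})^{T}/\sum_i t_{ij}(\theta^k)$, and $\theta_\ell^{k+1}=\theta_\ell^k$ for $\ell\ne j$. (The updated proportions need not sum to $1$.) *)

From HB Require Import structures.
From mathcomp Require Import all_boot all_order all_algebra.
From mathcomp Require Import all_classical all_reals all_analysis.
Set Implicit Arguments. Unset Strict Implicit. Unset Printing Implicit Defensive.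
Import Order.TTheory GRing.Theory Num.Theory.
Local Open Scope ring_scope.

Section GMM.
Variables (R : realType) (d J : nat).

Definition spd (S : 'M[R]_d) : Prop :=
  S^T = S /\ forall v : 'cV[R]_d, v != 0 -> 0 < (v^T *m S *m v) ord0 ord0.

Definition gauss (y mu : 'cV[R]_d) (S : 'M[R]_d) : R :=
  (Num.sqrt ((2 * pi) ^+ d * \det S))^-1 *
  expR (- (((y - mu)^T *m invmx S *m (y - mu)) ord0 ord0) / 2).

(* parameter theta = (p_j, mu_j, Sigma_j)_{j < J}; proportions need not sum to 1 *)
Record param := Param {
  prop : 'I_J -> R;
  mean : 'I_J -> 'cV[R]_d;
  cov  : 'I_J -> 'M[R]_d }.

Definition in_Theta (th : param) : Prop :=
  forall j, 0 < prop th j < 1 /\ spd (cov th j).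

Variable n : nat.
Variable y : 'I_n -> 'cV[R]_d.

Definition mixdens (th : param) (i : 'I_n) : R :=
  \sum_(l < J) prop th l * gauss (y i) (mean th l) (cov th l).

Definition loglik (th : param) : R := \sum_(i < n) ln (mixdens th i).

Definition modloglik (th : param) : R :=
  loglik th - n%:R * (\sum_(l < J) prop th l - 1).

Definition tpost (th : param) (i : 'I_n) (j : 'I_J) : R :=
  prop th j * gauss (y i) (mean th j) (cov th j) / mixdens th i.

Definition Dkl (th th' : param) : R :=
  \sum_(i < n) \sum_(j < J) tpost th' i j * ln (tpost th' i j / tpost th i j).

Definition cemm_step (th : param) (j : 'I_J) : param :=
  let s := \sum_(i < n) tpost th i j in
  let mu' := s^-1 *: \sum_(i < n) (tpost th i j *: y i) in
  let Sg' := s^-1 *: \sum_(i < n)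
               (tpost th i j *: ((y i - mu') *m (y i - mu')^T)) in
  Param (fun l => if l == j then s / n%:R else prop th l)
        (fun l => if l == j then mu' else mean th l)
        (fun l => if l == j then Sg' else cov th l).

End GMM.

(* Each CEMM step maximises, over the parameters of the updated component, the
   expected complete-data log-likelihood Q(. | theta^k) = sum_i sum_l t_il(theta^k)
   ln (p_l phi_l(y_i)) corrected by -n (sum_l p_l - 1), the term that makes the
   unconstrained proportion update p_j = (1/n) sum_i t_ij optimal.  Since
   ln f(y_i) = sum_l t_il(theta^k) (ln (p_l phi_l(y_i)) - ln t_il(theta)) for every
   theta, the increase of Lambda is the increase of this corrected Q-function plus
   D(theta^{k+1}, theta^k), a sum of Kullback-Leibler divergences.  The optimality of
   the weighted mean and covariance rests on the matrix inequality
   ln det A - ln det S <= tr (S^-1 A) - d, obtained from Cholesky factorisations. *)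
From HB Require Import structures.
From mathcomp Require Import all_boot all_order all_algebra.
From mathcomp Require Import all_classical all_reals all_analysis.
From mathcomp Require Import ring lra.
Import Order.TTheory GRing.Theory Num.Theory.
Local Open Scope ring_scope.
Set Implicit Arguments. Unset Strict Implicit. Unset Printing Implicit Defensive.

Section RealInequalities.
Variable R : realType.

Lemma ln_le_subr1 (x : R) : 0 < x -> ln x <= x - 1.
Proof.
move=> x_gt0; have := @le_ln1Dx R (x - 1).
by rewrite [1 + _]addrC subrK; apply; lra.
Qed.

Lemma subr_le_mul_ln_div (s q : R) : 0 < s -> 0 < q -> s - q <= s * ln (s / q).
Proof.
move=> s_gt0 q_gt0; have := ln_le_subr1 (divr_gt0 q_gt0 s_gt0).
rewrite !ln_div ?posrE // => lnle.
have sq : s * (q / s) = q by field; rewrite gt_eqF.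
nra.
Qed.

Lemma sumr_ord_gt0 m (f : 'I_m -> R) : (0 < m)%N -> (forall i, 0 < f i) ->
  0 < \sum_(i < m) f i.
Proof.
move=> m_gt0 f_gt0; rewrite (bigD1 (Ordinal m_gt0)) //=.
by rewrite ltr_wpDr ?f_gt0 // sumr_ge0 // => i _; apply/ltW.
Qed.

End RealInequalities.

Section SpdMatrices.
Variable R : realType.

Lemma spd_ulsub_gt0 n (P : 'M[R]_(1 + n)) : spd P -> 0 < ulsubmx P 0 0.
Proof.
move=> [_ posP]; have := posP (col_mx 1%:M 0).
rewrite -[P in _ *m P *m _]submxK tr_col_mx mul_row_block mul_row_col.
rewrite trmx1 trmx0 !mul1mx !mul0mx !mulmx0 !addr0 mulmx1; apply.
by rewrite col_mx_eq0 negb_and oner_eq0.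
Qed.

Lemma spd_ursub n (P : 'M[R]_(1 + n)) : spd P -> ursubmx P = (dlsubmx P)^T.
Proof. by move=> [symP _]; rewrite trmx_dlsub symP. Qed.

Definition schur n (P : 'M[R]_(1 + n)) : 'M[R]_n :=
  drsubmx P - (ulsubmx P 0 0)^-1 *: (dlsubmx P *m (dlsubmx P)^T).

Lemma spd_schur n (P : 'M[R]_(1 + n)) : spd P -> spd (schur P).
Proof.
move=> spdP; have a_gt0 := spd_ulsub_gt0 spdP; have urP := spd_ursub spdP.
have [symP posP] := spdP; split.
  by rewrite /schur linearB /= linearZ /= trmx_mul trmxK trmx_drsub symP.
move=> v v_neq0; set a := ulsubmx P 0 0; set b := dlsubmx P.
set c := - (a^-1 *: (b^T *m v)).
(* test the quadratic form of P on (c, v), where c eliminates the first block *)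
have := posP (col_mx c v).
rewrite -[P in _ *m P *m _]submxK tr_col_mx mul_row_block mul_row_col.
rewrite urP [ulsubmx P]mx11_scalar -/a -/b.
have -> : c^T = - (a^-1 *: (v^T *m b)) by rewrite /c linearN /= linearZ /= trmx_mul trmxK.
rewrite mul_mx_scalar scalerN scalerA mulfV ?gt_eqF // scale1r addNr mul0mx add0r.
have -> : (- (a^-1 *: (v^T *m b)) *m b^T + v^T *m drsubmx P) *m v = v^T *m schur P *m v.
  rewrite /schur mulmxDl mulmxBr mulmxBl mulNmx -!scalemxAl -!scalemxAr !mulmxA.
  by rewrite addrC mulNmx -scalemxAl.
by apply; rewrite col_mx_eq0 negb_and v_neq0 orbT.
Qed.

Lemma mxtrace_mul_tr_ge0 n (b : 'cV[R]_n) : 0 <= \tr (b *m b^T).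
Proof.
rewrite mxtrace_mulC trace_mx11 mxE; apply: sumr_ge0 => k _.
by rewrite mxE -expr2 sqr_ge0.
Qed.

(* The trace bound holds because ln det L = sum_k ln l_kk and ln (l_kk^2) <= l_kk^2 - 1,
   while tr (L L^T) dominates sum_k l_kk^2. *)
Definition cholesky_factor n (P L : 'M[R]_n) :=
  [/\ P = L *m L^T, 0 < \det L & 2 * ln (\det L) <= \tr P - n%:R].

Lemma cholesky_factor_block n (P : 'M[R]_(1 + n)) (L' : 'M[R]_n) :
  spd P -> cholesky_factor (schur P) L' ->
  cholesky_factor P
    (block_mx (Num.sqrt (ulsubmx P 0 0))%:M 0
              ((Num.sqrt (ulsubmx P 0 0))^-1 *: dlsubmx P) L').
Proof.
move=> spdP [schurE detL'_gt0 lnL'].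
have a_gt0 := spd_ulsub_gt0 spdP; have urP := spd_ursub spdP.
set a := ulsubmx P 0 0 in a_gt0 schurE lnL' *.
set b := dlsubmx P in urP schurE lnL' *; set r := Num.sqrt a.
have r_gt0 : 0 < r by rewrite sqrtr_gt0.
have rr : r * r = a by rewrite -expr2 sqr_sqrtr // ltW.
split.
- rewrite tr_block_mx mulmx_block -{1}[P]submxK urP [ulsubmx P]mx11_scalar -/a -/b.
  congr block_mx.
  + by rewrite tr_scalar_mx -scalar_mxM rr trmx0 mul0mx addr0.
  + by rewrite mul0mx addr0 mul_scalar_mx linearZ /= scalerA mulfV ?gt_eqF // scale1r.
  + rewrite trmx0 mulmx0 addr0 tr_scalar_mx mul_mx_scalar scalerA mulfV ?gt_eqF //.
    by rewrite scale1r.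
  + rewrite -schurE /schur -/a -/b linearZ /= -scalemxAl -scalemxAr scalerA -invfM rr.
    by rewrite addrC subrK.
- by rewrite det_lblock det_scalar1 mulr_gt0.
rewrite det_lblock det_scalar1 lnM ?posrE //.
have lnr : ln r + ln r = ln a by rewrite -lnM ?posrE // rr.
have lna := ln_le_subr1 a_gt0.
have trP : \tr P = a + \tr (drsubmx P).
  by rewrite -{1}[P]submxK mxtrace_block [ulsubmx P]mx11_scalar mxtrace_scalar.
have trD : \tr (drsubmx P) = \tr (schur P) + a^-1 * \tr (b *m b^T).
  by rewrite /schur raddfB /= mxtraceZ -/a -/b subrK.
have trbb : 0 <= a^-1 * \tr (b *m b^T).
  by rewrite mulr_ge0 ?mxtrace_mul_tr_ge0 // invr_ge0 ltW.
rewrite trP trD natrD; lra.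
Qed.

Lemma spd_cholesky n (P : 'M[R]_n) : spd P -> exists L, cholesky_factor P L.
Proof.
elim: n P => [|n IH] P spdP.
  exists 1%:M; split; first by rewrite [P]flatmx0 [_ *m _]flatmx0.
    by rewrite det1.
  by rewrite det1 ln1 /mxtrace big_ord0 subrr mulr0.
have [L' cholL'] := IH _ (spd_schur spdP).
by eexists; apply: cholesky_factor_block cholL'.
Qed.

Lemma spd_det_gt0 n (S : 'M[R]_n) : spd S -> 0 < \det S.
Proof.
by move=> /spd_cholesky [L [-> detL_gt0 _]]; rewrite det_mulmx det_tr mulr_gt0.
Qed.

Lemma spd_unitmx n (S : 'M[R]_n) : spd S -> S \in unitmx.
Proof. by move=> /spd_det_gt0 detS_gt0; rewrite unitmxE unitfE gt_eqF. Qed.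

Lemma spd_quad_invmx_ge0 n (S : 'M[R]_n) (v : 'cV[R]_n) : spd S ->
  0 <= (v^T *m invmx S *m v) 0 0.
Proof.
move=> spdS; have unitS := spd_unitmx spdS; have [symS posS] := spdS.
have [->|v_neq0] := eqVneq v 0; first by rewrite mulmx0 mxE.
have -> : v^T *m invmx S *m v = (invmx S *m v)^T *m S *m (invmx S *m v).
  by rewrite trmx_mul trmx_inv symS -!mulmxA (mulmxA S) mulmxV // mul1mx.
apply/ltW/posS; apply: contra v_neq0 => /eqP Sv0.
by rewrite -(mulKVmx unitS v) Sv0 mulmx0.
Qed.

(* Conjugating A by the Cholesky factor of S reduces this to the case S = 1,
   which is the trace bound of spd_cholesky. *)
Lemma ln_det_sub_le n (S A : 'M[R]_n) : spd S -> spd A ->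
  ln (\det A) - ln (\det S) <= \tr (invmx S *m A) - n%:R.
Proof.
move=> spdS [symA posA]; have [L [SE detL_gt0 _]] := spd_cholesky spdS.
have unitL : L \in unitmx by rewrite unitmxE unitfE gt_eqF.
set N := invmx L.
have unitNT : N^T \in unitmx by rewrite unitmx_tr unitmx_inv.
set M := N *m A *m N^T.
have spdM : spd M.
  split; first by rewrite /M !trmx_mul trmxK symA mulmxA.
  move=> v v_neq0.
  have -> : v^T *m M *m v = (N^T *m v)^T *m A *m (N^T *m v).
    by rewrite /M !trmx_mul trmxK !mulmxA.
  apply: posA; apply: contra v_neq0 => /eqP NTv0.
  by rewrite -(mulKmx unitNT v) NTv0 mulmx0.
have [K [ME detK_gt0 lnK]] := spd_cholesky spdM.
have detM : \det M = \det K * \det K by rewrite ME det_mulmx det_tr.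
have detA : \det A = \det M * (\det L * \det L).
  by rewrite /M !det_mulmx det_tr /N det_inv; field; rewrite gt_eqF.
have detS : \det S = \det L * \det L by rewrite SE det_mulmx det_tr.
have invS : invmx S = N^T *m N.
  have unitS : S \in unitmx by rewrite SE unitmx_mul unitL unitmx_tr unitL.
  have SN : S *m (N^T *m N) = 1%:M.
    by rewrite SE -mulmxA (mulmxA L^T) -trmx_mul mulVmx // trmx1 mul1mx mulmxV.
  by rewrite -[RHS](mulKmx unitS) SN mulmx1.
have trM : \tr (invmx S *m A) = \tr M by rewrite invS -mulmxA mxtrace_mulC /M.
have detM_gt0 : 0 < \det M by rewrite detM mulr_gt0.
rewrite detA detS trM !lnM ?posrE ?mulr_gt0 //.
move: lnK; rewrite detM lnM ?posrE //; lra.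
Qed.

End SpdMatrices.

Section GaussianWeightedFit.
Variables (R : realType) (d n : nat).

Lemma gauss_gt0 (x mu : 'cV[R]_d) S : spd S -> 0 < gauss x mu S.
Proof.
move=> /spd_det_gt0 detS_gt0; rewrite /gauss mulr_gt0 ?expR_gt0 // invr_gt0.
by rewrite sqrtr_gt0 mulr_gt0 // exprn_gt0 // mulr_gt0 // pi_gt0.
Qed.

Lemma ln_gauss (x mu : 'cV[R]_d) S : spd S ->
  ln (gauss x mu S) = - (ln ((2 * pi) ^+ d) + ln (\det S)) / 2
     - ((x - mu)^T *m invmx S *m (x - mu)) 0 0 / 2.
Proof.
move=> /spd_det_gt0 detS_gt0.
have pi_gt0 : 0 < (2 * pi) ^+ d :> R by rewrite exprn_gt0 // mulr_gt0 // pi_gt0.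
have c_gt0 : 0 < (2 * pi) ^+ d * \det S by rewrite mulr_gt0.
have lnsqrt : ln (Num.sqrt ((2 * pi) ^+ d * \det S)) * 2 =
              ln ((2 * pi) ^+ d) + ln (\det S).
  rewrite -lnM ?posrE // -[in RHS](sqr_sqrtr (ltW c_gt0)) expr2 lnM ?posrE ?sqrtr_gt0 //.
  by rewrite mulr_natr mulr2n.
rewrite /gauss lnM ?posrE ?invr_gt0 ?expR_gt0 ?sqrtr_gt0 // lnV ?posrE ?sqrtr_gt0 //.
by rewrite expRK -lnsqrt !mulNr mulrK ?unitfE ?pnatr_eq0.
Qed.

Lemma quad_mxtrace (z : 'cV[R]_d) (P : 'M[R]_d) :
  (z^T *m P *m z) 0 0 = \tr (P *m (z *m z^T)).
Proof. by rewrite -trace_mx11 -mulmxA mxtrace_mulC !mulmxA. Qed.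

Variables (w : 'I_n -> R) (y : 'I_n -> 'cV[R]_d).

Definition wmean : 'cV[R]_d := (\sum_(i < n) w i)^-1 *: \sum_(i < n) (w i *: y i).

Definition wcov : 'M[R]_d :=
  (\sum_(i < n) w i)^-1 *: \sum_(i < n) (w i *: ((y i - wmean) *m (y i - wmean)^T)).

Hypothesis wsum_neq0 : \sum_(i < n) w i != 0.

Lemma wsum_centered : \sum_(i < n) (w i *: (y i - wmean)) = 0.
Proof.
under eq_bigr do rewrite scalerBr.
by rewrite sumrB -scaler_suml /wmean scalerA mulfV // scale1r subrr.
Qed.

Lemma wsum_scatter (mu : 'cV[R]_d) :
  \sum_(i < n) (w i *: ((y i - mu) *m (y i - mu)^T)) =
  (\sum_(i < n) w i) *: (wcov + (wmean - mu) *m (wmean - mu)^T).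
Proof.
set e := wmean - mu.
rewrite scalerDr /wcov scalerA mulfV // scale1r scaler_suml -big_split /=.
rewrite (eq_bigr (fun i => w i *: ((y i - wmean) *m (y i - wmean)^T) +
   ((w i *: (y i - wmean)) *m e^T +
    (e *m (w i *: (y i - wmean))^T + w i *: (e *m e^T))))).
  rewrite !big_split /= -mulmx_suml wsum_centered mul0mx add0r.
  by rewrite -mulmx_sumr -raddf_sum /= wsum_centered trmx0 mulmx0 add0r.
move=> i _; have -> : y i - mu = (y i - wmean) + e by rewrite /e addrA subrK.
move: (y i - wmean) => z.
rewrite linearD /= mulmxDl !mulmxDr !scalerDr linearZ /= -scalemxAl -scalemxAr.
by rewrite !addrA.
Qed.

Lemma wsum_quad (mu : 'cV[R]_d) (P : 'M[R]_d) :
  \sum_(i < n) w i * ((y i - mu)^T *m P *m (y i - mu)) 0 0 =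
  (\sum_(i < n) w i) * (\tr (P *m wcov) + ((wmean - mu)^T *m P *m (wmean - mu)) 0 0).
Proof.
under eq_bigr do rewrite quad_mxtrace -mxtraceZ scalemxAr.
rewrite -raddf_sum /= -mulmx_sumr wsum_scatter -scalemxAr mxtraceZ.
by rewrite mulmxDr mxtraceD quad_mxtrace.
Qed.

Lemma wsum_ln_gauss (mu : 'cV[R]_d) S : spd S ->
  \sum_(i < n) w i * ln (gauss (y i) mu S) =
  (\sum_(i < n) w i) * (- (ln ((2 * pi) ^+ d) + ln (\det S))
     - \tr (invmx S *m wcov) - ((wmean - mu)^T *m invmx S *m (wmean - mu)) 0 0) / 2.
Proof.
move=> spdS; pose K := - (ln ((2 * pi) ^+ d) + ln (\det S)) / 2.
rewrite (eq_bigr (fun i => w i * K -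
  (w i * ((y i - mu)^T *m invmx S *m (y i - mu)) 0 0) / 2)); last first.
  by move=> i _; rewrite ln_gauss // mulrBr !mulrA.
rewrite big_split /= sumrN -!mulr_suml wsum_quad /K; lra.
Qed.

Lemma wsum_ln_gauss_le (mu : 'cV[R]_d) S :
  0 < \sum_(i < n) w i -> spd S -> spd wcov ->
  \sum_(i < n) w i * ln (gauss (y i) mu S) <=
  \sum_(i < n) w i * ln (gauss (y i) wmean wcov).
Proof.
move=> wsum_gt0 spdS spdC.
rewrite !wsum_ln_gauss // mulVmx ?spd_unitmx // mxtrace1 subrr trmx0 !mul0mx.
rewrite [in X in _ <= X]mxE.
have lndet := ln_det_sub_le spdS spdC.
have quad_ge0 := spd_quad_invmx_ge0 (wmean - mu) spdS.
rewrite ler_pM2r // ler_pM2l //; lra.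
Qed.

End GaussianWeightedFit.

Section MixtureLikelihood.
Variables (R : realType) (d J n : nat) (y : 'I_n -> 'cV[R]_d).
Hypothesis J_gt0 : (0 < J)%N.

(* Theta with the constraint p_l < 1 dropped: a CEMM step can produce p_j >= 1. *)
Definition admissible (th : param R d J) :=
  forall l, 0 < prop th l /\ spd (cov th l).

Definition joint (th : param R d J) i l := prop th l * gauss (y i) (mean th l) (cov th l).

Lemma joint_gt0 (t : param R d J) i l : admissible t -> 0 < joint t i l.
Proof. by move=> /(_ l) [p_gt0 spdS]; rewrite /joint mulr_gt0 // gauss_gt0. Qed.

Lemma mixdens_gt0 (t : param R d J) i : admissible t -> 0 < mixdens y t i.
Proof. by move=> admt; apply: sumr_ord_gt0 => // l; apply: joint_gt0. Qed.

Lemma tpost_gt0 (t : param R d J) i l : admissible t -> 0 < tpost y t i l.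
Proof. by move=> admt; rewrite divr_gt0 ?mixdens_gt0 // joint_gt0. Qed.

Lemma tpost_sum1 (t : param R d J) i : admissible t -> \sum_(l < J) tpost y t i l = 1.
Proof. by move=> admt; rewrite -mulr_suml divff // gt_eqF // mixdens_gt0. Qed.

Lemma ln_tpost (t : param R d J) i l : admissible t ->
  ln (tpost y t i l) = ln (joint t i l) - ln (mixdens y t i).
Proof. by move=> admt; rewrite ln_div ?posrE ?mixdens_gt0 ?joint_gt0. Qed.

Lemma ln_joint (t : param R d J) i l : admissible t ->
  ln (joint t i l) = ln (prop t l) + ln (gauss (y i) (mean t l) (cov t l)).
Proof. by move=> /(_ l) [p_gt0 spdS]; rewrite lnM ?posrE ?gauss_gt0. Qed.

(* ln f(y_i) = E_{t(th)}[ln joint - ln t] since the posteriors sum to 1 and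
   ln joint - ln t = ln f for every component. *)
Lemma ln_mixdens_expect th th' i : admissible th -> admissible th' ->
  ln (mixdens y th' i) =
  \sum_(l < J) tpost y th i l * (ln (joint th' i l) - ln (tpost y th' i l)).
Proof.
move=> adm adm'; under eq_bigr do rewrite ln_tpost // opprB addrC subrK.
by rewrite -mulr_suml tpost_sum1 // mul1r.
Qed.

Lemma Dkl_ge0 th th' : admissible th -> admissible th' -> 0 <= Dkl y th' th.
Proof.
move=> adm adm'; apply: sumr_ge0 => i _.
have sum0 : \sum_(l < J) (tpost y th i l - tpost y th' i l) = 0.
  by rewrite sumrB !tpost_sum1 // subrr.
rewrite -[X in X <= _]sum0; apply: ler_sum => l _.
exact: subr_le_mul_ln_div (tpost_gt0 i l adm) (tpost_gt0 i l adm').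
Qed.

Lemma loglik_sub th th' : admissible th -> admissible th' ->
  loglik y th' - loglik y th =
  \sum_(i < n) \sum_(l < J) tpost y th i l * (ln (joint th' i l) - ln (joint th i l))
  + Dkl y th' th.
Proof.
move=> adm adm'; rewrite /loglik /Dkl -sumrB -big_split; apply: eq_bigr => i _.
rewrite (ln_mixdens_expect i adm adm') (ln_mixdens_expect i adm adm).
rewrite -sumrB -big_split; apply: eq_bigr => l _.
rewrite ln_div ?posrE ?tpost_gt0 //=; ring.
Qed.

End MixtureLikelihood.

Section CemmStep.
Variables (R : realType) (d J n : nat) (y : 'I_n -> 'cV[R]_d).
Hypotheses (J_gt0 : (0 < J)%N) (n_gt0 : (0 < n)%N).
Variables (th : param R d J) (j : 'I_J).
Hypothesis adm : admissible th.

Let th' := cemm_step y th j.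
Let w i := tpost y th i j.
Let s := \sum_(i < n) w i.

Lemma wsum_tpost_gt0 : 0 < s.
Proof. by apply: sumr_ord_gt0 => // i; apply: tpost_gt0. Qed.

Lemma prop_cemm_step l : prop th' l = if l == j then s / n%:R else prop th l.
Proof. by []. Qed.

Lemma mean_cemm_step : mean th' j = wmean w y.
Proof. by rewrite /= eqxx. Qed.

Lemma cov_cemm_step : cov th' j = wcov w y.
Proof. by rewrite /= eqxx. Qed.

Lemma joint_cemm_step_neq i l : l != j -> joint y th' i l = joint y th i l.
Proof. by move=> /negbTE lj; rewrite /joint /= lj. Qed.

Lemma admissible_cemm_step : (forall l, spd (cov th' l)) -> admissible th'.
Proof.
move=> spd_th' l; split => //; rewrite prop_cemm_step; case: eqP => _.
  by rewrite divr_gt0 ?ltr0n ?wsum_tpost_gt0.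
by have [] := adm l.
Qed.

Hypothesis adm' : admissible th'.

Lemma expected_ln_joint_sub :
  \sum_(i < n) \sum_(l < J) tpost y th i l * (ln (joint y th' i l) - ln (joint y th i l)) =
  s * (ln (prop th' j) - ln (prop th j)) +
  (\sum_(i < n) w i * ln (gauss (y i) (wmean w y) (wcov w y)) -
   \sum_(i < n) w i * ln (gauss (y i) (mean th j) (cov th j))).
Proof.
rewrite /s mulr_suml -sumrB -big_split; apply: eq_bigr => i _.
rewrite (bigD1 j) //= big1 ?addr0; last first.
  by move=> l lj; rewrite joint_cemm_step_neq // subrr mulr0.
rewrite !ln_joint // -mean_cemm_step -cov_cemm_step /w; ring.
Qed.

Lemma sum_prop_cemm_step :
  \sum_(l < J) prop th' l - \sum_(l < J) prop th l = s / n%:R - prop th j.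
Proof.
rewrite (bigD1 j) //= [in X in _ - X](bigD1 j) //= eqxx.
under [in X in _ + X - _]eq_bigr => l lj do rewrite (negbTE lj).
by rewrite opprD addrACA subrr addr0.
Qed.

(* With q = n p_j, the proportions contribute s ln (s / q) - (s - q) >= 0. *)
Lemma Dkl_le_modloglik_cemm_step :
  Dkl y th' th <= modloglik y th' - modloglik y th.
Proof.
have s_gt0 := wsum_tpost_gt0; have [p_gt0 spdS] := adm j.
have spdC : spd (wcov w y) by rewrite -cov_cemm_step; have [] := adm' j.
have gauss_le := wsum_ln_gauss_le (lt0r_neq0 s_gt0) (mean th j) s_gt0 spdS spdC.
have n_gt0' : 0 < n%:R :> R by rewrite ltr0n.
have prop_le := subr_le_mul_ln_div s_gt0 (mulr_gt0 n_gt0' p_gt0).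
have LD := loglik_sub y J_gt0 adm adm'.
rewrite expected_ln_joint_sub prop_cemm_step eqxx in LD.
have sum_prop := sum_prop_cemm_step.
rewrite ln_div ?posrE // in LD.
rewrite ln_div ?posrE ?mulr_gt0 // lnM ?posrE // in prop_le.
have ns : n%:R * (s / n%:R) = s by field; rewrite gt_eqF.
rewrite /modloglik -/th'.
nra.
Qed.

End CemmStep.

Unset Implicit Arguments.

Theorem proposition2 (R : realType) (d J n : nat)
  (hd : (0 < d)%N) (hJ : (0 < J)%N) (hn : (0 < n)%N)
  (y : 'I_n -> 'cV[R]_d) (th : nat -> param R d J) :
  in_Theta (th 0%N) ->
  (* the CEMM recursion, component j = k mod J (0-based) updated at step k *)
  (forall (k : nat) (j : 'I_J), nat_of_ord j = (k %% J)%N ->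
     th k.+1 = cemm_step y (th k) j) ->
  (* the algorithm is well defined: all covariance iterates are SPD *)
  (forall (k : nat) (j : 'I_J), spd (cov (th k) j)) ->
  (forall k : nat, modloglik y (th k) <= modloglik y (th k.+1)) /\
  (forall k : nat,
     Dkl y (th k.+1) (th k) <= modloglik y (th k.+1) - modloglik y (th k)).
Proof.
move=> th0_in step spd_th.
have thS k : th k.+1 = cemm_step y (th k) (Ordinal (ltn_pmod k hJ)) by apply: step.
have adm k : admissible (th k).
  elim: k => [|k IH] l; first by have [/andP[p_gt0 _] spdS] := th0_in l.
  by rewrite thS; apply: admissible_cemm_step => // l'; rewrite -thS.
have Dkl_le k : Dkl y (th k.+1) (th k) <= modloglik y (th k.+1) - modloglik y (th k).
  by rewrite thS; apply: Dkl_le_modloglik_cemm_step; rewrite // -thS.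
split=> // k; rewrite -subr_ge0; apply: le_trans (Dkl_le k).
exact: Dkl_ge0.
Qed.
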